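(* Let $\pi(t)\in\mathbb R^m$, $t\ge0$, be vectors with nonnegative entries, $\mathbf 1_m^\top\pi(t)=1$, and $\pi(t)^\top=\pi(t+1)^\top A(t)$ for all $t\ge0$. Let $\theta_i(t)$ be generated by the DPG iteration and set $\bar\theta(t)=\sum_{j=1}^m\pi_j(t)\theta_j(t)$. Then for every $v\in\Omega$ and every $t\ge0$, $$\sum_{i=1}^m\pi_i(t+1)\|\theta_i(t+1)-v\|^2\le\sum_{i=1}^m\pi_i(t)\|\theta_i(t)-v\|^2-2\alpha(t)c^\top(\bar\theta(t)-v)+C^2\alpha^2(t)+2C\alpha(t)\sum_{i=1}^m\pi_i(t)\|\theta_i(t)-\bar\theta(t)\|-\sum_{i=1}^m\pi_i(t+1)\|\phi_i(t)\|^2.$$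
   Context: Agents $\mathcal V=\{1,\dots,m\}$. $A(t)=[a_{ij}(t)]\in\mathbb R^{m\times m}$, $t\in\mathbb Z_{\ge0}$, are row-stochastic matrices with nonnegative entries ($\sum_j a_{ij}(t)=1$). Let $\Omega_1,\dots,\Omega_m\subseteq\mathbb R^p$ be nonempty closed convex sets with $\Omega=\bigcap_i\Omega_i\neq\emptyset$, let $c\in\mathbb R^p$, $C=\|c\|$, and let $\alpha(t)>0$ be stepsizes. $P_K$ is Euclidean projection onto a closed convex set $K$. The DPG iteration, from arbitrary $\theta_i(0)\in\mathbb R^p$, is $\theta_i(t+1)=P_{\Omega_i}\big[\sum_{j=1}^m a_{ij}(t)\theta_j(t)-\alpha(t)c\big]$, and $\phi_i(t)=\theta_i(t+1)-\big[\sum_{j=1}^m a_{ij}(t)\theta_j(t)-\alpha(t)c\big]$. *)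

From HB Require Import structures.
From mathcomp Require Import all_boot all_order all_algebra.
From mathcomp Require Import all_classical all_reals all_analysis.
Set Implicit Arguments. Unset Strict Implicit. Unset Printing Implicit Defensive.
Import Order.TTheory GRing.Theory Num.Theory.
Import numFieldNormedType.Exports.
Local Open Scope ring_scope.
Local Open Scope classical_set_scope.

Definition dotv {R : realType} {p : nat} (u v : 'rV[R]_p) : R :=
  \sum_(k < p) u ord0 k * v ord0 k.
Definition enorm {R : realType} {p : nat} (u : 'rV[R]_p) : R :=
  Num.sqrt (dotv u u).

Definition is_proj {R : realType} {p : nat} (K : set 'rV[R]_p) (x y : 'rV[R]_p) : Prop :=
  K y /\ forall z, K z -> enorm (x - y) <= enorm (x - z).

Definition row_stochastic {R : realType} {m : nat} (A : 'M[R]_m) : Prop :=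
  (forall i j, 0 <= A i j) /\ (forall i, \sum_(j < m) A i j = 1).

Definition dpg_mix {R : realType} {m p : nat} (A : nat -> 'M[R]_m)
  (theta : nat -> 'I_m -> 'rV[R]_p) (alpha : nat -> R) (c : 'rV[R]_p)
  (t : nat) (i : 'I_m) : 'rV[R]_p :=
  \sum_(j < m) A t i j *: theta t j - alpha t *: c.

Definition dpg_phi {R : realType} {m p : nat} (A : nat -> 'M[R]_m)
  (theta : nat -> 'I_m -> 'rV[R]_p) (alpha : nat -> R) (c : 'rV[R]_p)
  (t : nat) (i : 'I_m) : 'rV[R]_p :=
  theta t.+1 i - dpg_mix A theta alpha c t i.

Definition wavg {R : realType} {m p : nat} (pi : nat -> 'I_m -> R)
  (theta : nat -> 'I_m -> 'rV[R]_p) (t : nat) : 'rV[R]_p :=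
  \sum_(j < m) pi t j *: theta t j.

From HB Require Import structures.
From mathcomp Require Import all_boot all_order all_algebra.
From mathcomp Require Import all_classical all_reals all_analysis.
From mathcomp Require Import ring lra.
Import Order.TTheory GRing.Theory Num.Theory.
Import numFieldNormedType.Exports.
Local Open Scope ring_scope.
Local Open Scope classical_set_scope.

(* Projecting onto a convex set containing v decreases the squared distance to
   v by at least the squared length of the projection step phi_i(t).  Before
   projecting, the mixed point of agent i minus v is a convex combination of the
   theta_j(t) - v shifted by -alpha(t) c, so by convexity of the squared norm its
   squared length is at most sum_j a_ij ||theta_j - v||^2
   - 2 alpha <c, sum_j a_ij (theta_j - v)> + alpha^2 C^2.  Averaging with the
   weights pi(t+1) and using pi(t)^T = pi(t+1)^T A(t) collapses the double sums
   into pi(t)-averages, giving the claim even without the (nonnegative)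
   consensus term 2 C alpha sum_i pi_i ||theta_i - theta_bar||. *)

Section InnerProduct.
Context {R : realType} {p : nat}.
Implicit Types u v w : 'rV[R]_p.

Lemma dotvC u v : dotv u v = dotv v u.
Proof. by apply: eq_bigr => k _; rewrite mulrC. Qed.

Lemma dotvDl u v w : dotv (u + v) w = dotv u w + dotv v w.
Proof. by rewrite /dotv -big_split; apply: eq_bigr => k _; rewrite mxE mulrDl. Qed.

Lemma dotvNl u w : dotv (- u) w = - dotv u w.
Proof. by rewrite /dotv -sumrN; apply: eq_bigr => k _; rewrite mxE mulNr. Qed.

Lemma dotvBl u v w : dotv (u - v) w = dotv u w - dotv v w.
Proof. by rewrite dotvDl dotvNl. Qed.

Lemma dotvZl a u w : dotv (a *: u) w = a * dotv u w.
Proof. by rewrite /dotv mulr_sumr; apply: eq_bigr => k _; rewrite mxE mulrA. Qed.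

Lemma dotvDr u v w : dotv w (u + v) = dotv w u + dotv w v.
Proof. by rewrite dotvC dotvDl !(dotvC w). Qed.

Lemma dotvNr u w : dotv w (- u) = - dotv w u.
Proof. by rewrite dotvC dotvNl dotvC. Qed.

Lemma dotvBr u v w : dotv w (u - v) = dotv w u - dotv w v.
Proof. by rewrite dotvDr dotvNr. Qed.

Lemma dotvZr a u w : dotv w (a *: u) = a * dotv w u.
Proof. by rewrite dotvC dotvZl dotvC. Qed.

Lemma dotv_sumr {I : finType} (F : I -> 'rV[R]_p) w :
  dotv w (\sum_i F i) = \sum_i dotv w (F i).
Proof.
rewrite /dotv exchange_big /=; apply: eq_bigr => k _.
by rewrite summxE mulr_sumr.
Qed.

Lemma dotv_ge0 u : 0 <= dotv u u.
Proof. by apply: sumr_ge0 => k _; rewrite -expr2 sqr_ge0. Qed.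

Lemma enorm_ge0 u : 0 <= enorm u.
Proof. exact: sqrtr_ge0. Qed.

Lemma enorm_sq u : enorm u ^+ 2 = dotv u u.
Proof. by rewrite /enorm sqr_sqrtr // dotv_ge0. Qed.

Lemma dotv_sqD u v : dotv (u + v) (u + v) = dotv u u + 2 * dotv u v + dotv v v.
Proof. rewrite dotvDl !dotvDr (dotvC v u); ring. Qed.

Lemma dotv_sqB u v : dotv (u - v) (u - v) = dotv u u - 2 * dotv u v + dotv v v.
Proof. rewrite dotvBl !dotvBr (dotvC v u); ring. Qed.

Lemma scaler_sum_subr {I : finType} (a : I -> R) (F : I -> 'rV[R]_p) v :
  \sum_i a i = 1 -> \sum_i a i *: F i - v = \sum_i a i *: (F i - v).
Proof.
move=> a1; under [RHS]eq_bigr => i _ do rewrite scalerBr.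
by rewrite sumrB -scaler_suml a1 scale1r.
Qed.

Lemma enorm_sq_convex {I : finType} (a : I -> R) (F : I -> 'rV[R]_p) :
  (forall i, 0 <= a i) -> \sum_i a i = 1 ->
  enorm (\sum_i a i *: F i) ^+ 2 <= \sum_i a i * enorm (F i) ^+ 2.
Proof.
move=> a0 a1; rewrite enorm_sq; set mu := \sum_i a i *: F i.
under eq_bigr => i _ do rewrite enorm_sq.
have mu_sq : dotv mu mu = \sum_i a i * dotv mu (F i).
  by rewrite {2}/mu dotv_sumr; apply: eq_bigr => i _; rewrite dotvZr.
have var_ge0 : 0 <= \sum_i a i * dotv (F i - mu) (F i - mu).
  by apply: sumr_ge0 => i _; rewrite mulr_ge0 // dotv_ge0.
have var_eq : \sum_i a i * dotv (F i - mu) (F i - mu) =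
    \sum_i a i * dotv (F i) (F i) - 2 * dotv mu mu + dotv mu mu * \sum_i a i.
  rewrite [X in _ = _ - 2 * X + _]mu_sq mulr_sumr mulr_sumr -sumrB -big_split /=.
  by apply: eq_bigr => i _; rewrite dotv_sqB (dotvC (F i)); ring.
by rewrite var_eq a1 mulr1 in var_ge0; lra.
Qed.

End InnerProduct.

Section Projection.
Context {R : realType} {p : nat} {K : set 'rV[R]_p} {x y v : 'rV[R]_p}.
Hypotheses (convK : convex_set K) (proj_xy : is_proj K x y) (Kv : K v).

Lemma is_proj_obtuse : dotv (x - y) (v - y) <= 0.
Proof.
have [Ky y_min] := proj_xy.
set d := dotv (x - y) (v - y); set N := dotv (v - y) (v - y).
rewrite leNgt; apply/negP => d_gt0.
have N_ge0 : 0 <= N by apply: dotv_ge0.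
(* stepping from y towards v by s = d / (d + N) would strictly approach x *)
set s := d / (d + N).
have s_gt0 : 0 < s by rewrite divr_gt0 //; lra.
have s_le1 : s <= 1 by rewrite ler_pdivrMr ?mul1r; lra.
have ds : s * (d + N) = d by rewrite /s divfK // gt_eqF //; lra.
pose l : {i01 R} := Itv01 (ltW s_gt0) s_le1.
have Kz : K (y + s *: (v - y)).
  have -> : y + s *: (v - y) = conv l (v : convex_lmodType 'rV[R]_p) y.
    by rewrite /conv /= /unstable.onem scalerBl scale1r scalerBr addrCA.
  by have := convK v y l; rewrite !inE; apply.
have := y_min _ Kz; rewrite /enorm ler_sqrt ?dotv_ge0 //.
rewrite opprD addrA [X in _ <= X]dotv_sqB dotvZr dotvZl dotvZr -/d -/N => closer.
have : 2 * d <= s * N by rewrite -(ler_pM2l s_gt0); lra.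
nra.
Qed.

Lemma is_proj_sqdist :
  enorm (y - v) ^+ 2 <= enorm (x - v) ^+ 2 - enorm (y - x) ^+ 2.
Proof.
have := is_proj_obtuse; rewrite !enorm_sq.
have -> : x - v = (x - y) + (y - v) by rewrite addrA subrK.
rewrite -(opprB x y) -(opprB y v).
move: (x - y) (y - v) => a b.
rewrite dotv_sqD !dotvNl !dotvNr opprK; lra.
Qed.

End Projection.

Section DPGStep.
Context {R : realType} {m p : nat}.
Context {A : nat -> 'M[R]_m} {Om : 'I_m -> set 'rV[R]_p} {c : 'rV[R]_p}.
Context {alpha : nat -> R} { pi : nat -> 'I_m -> R}.
Context {theta : nat -> 'I_m -> 'rV[R]_p} {v : 'rV[R]_p} {t : nat}.
Hypotheses (stochA : row_stochastic (A t)) (convOm : forall i, convex_set (Om i)).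
Hypotheses (pi_sum1 : \sum_(i < m) pi t i = 1) (pi'_sum1 : \sum_(i < m) pi t.+1 i = 1).
Hypothesis pi'_ge0 : forall i, 0 <= pi t.+1 i.
Hypothesis pi_mix : forall j, pi t j = \sum_(i < m) pi t.+1 i * A t i j.
Hypothesis proj_theta : forall i, is_proj (Om i) (dpg_mix A theta alpha c t i) (theta t.+1 i).
Hypothesis Om_v : forall i, Om i v.

Let w i := \sum_(j < m) A t i j *: (theta t j - v).

Lemma sum_pi_mix (f : 'I_m -> R) :
  \sum_(i < m) pi t.+1 i * (\sum_(j < m) A t i j * f j) = \sum_(j < m) pi t j * f j.
Proof.
under eq_bigr => i _ do rewrite mulr_sumr.
rewrite exchange_big /=; apply: eq_bigr => j _.
by rewrite pi_mix mulr_suml; apply: eq_bigr => i _; rewrite mulrA.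
Qed.

Lemma dpg_mix_sqdist i :
  enorm (dpg_mix A theta alpha c t i - v) ^+ 2 <=
    \sum_(j < m) A t i j * enorm (theta t j - v) ^+ 2
    - 2 * alpha t * dotv c (w i) + enorm c ^+ 2 * alpha t ^+ 2.
Proof.
have [A_ge0 A_sum1] := stochA.
have -> : dpg_mix A theta alpha c t i - v = w i - alpha t *: c.
  by rewrite /dpg_mix addrAC scaler_sum_subr.
have := enorm_sq_convex (fun j => A t i j) (fun j => theta t j - v) (A_ge0 i) (A_sum1 i).
rewrite -/(w i) !enorm_sq dotv_sqB dotvZr dotvZl dotvZr (dotvC (w i)); lra.
Qed.

Lemma sum_pi_dotv_mix :
  \sum_(i < m) pi t.+1 i * dotv c (w i) = dotv c (wavg pi theta t - v).
Proof.
rewrite /wavg scaler_sum_subr // dotv_sumr.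
under [RHS]eq_bigr => j _ do rewrite dotvZr.
rewrite -sum_pi_mix; apply: eq_bigr => i _; congr (_ * _).
by rewrite dotv_sumr; apply: eq_bigr => j _; rewrite dotvZr.
Qed.

Lemma dpg_step_sqdist :
  \sum_(i < m) pi t.+1 i * enorm (theta t.+1 i - v) ^+ 2
  <= \sum_(i < m) pi t i * enorm (theta t i - v) ^+ 2
     - 2 * alpha t * dotv c (wavg pi theta t - v)
     + enorm c ^+ 2 * alpha t ^+ 2
     - \sum_(i < m) pi t.+1 i * enorm (dpg_phi A theta alpha c t i) ^+ 2.
Proof.
pose bound i := \sum_(j < m) A t i j * enorm (theta t j - v) ^+ 2
  - 2 * alpha t * dotv c (w i) + enorm c ^+ 2 * alpha t ^+ 2
  - enorm (dpg_phi A theta alpha c t i) ^+ 2.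
have agent_bound i : enorm (theta t.+1 i - v) ^+ 2 <= bound i.
  have := is_proj_sqdist (convOm i) (proj_theta i) (Om_v i).
  by have := dpg_mix_sqdist i; rewrite /dpg_phi /bound; lra.
apply: le_trans (_ : \sum_i pi t.+1 i * bound i <= _).
  by apply: ler_sum => i _; rewrite ler_wpM2l.
rewrite (eq_bigr (fun i => pi t.+1 i * (\sum_(j < m) A t i j * enorm (theta t j - v) ^+ 2)
  - 2 * alpha t * (pi t.+1 i * dotv c (w i)) + enorm c ^+ 2 * alpha t ^+ 2 * pi t.+1 i
  - pi t.+1 i * enorm (dpg_phi A theta alpha c t i) ^+ 2)); last by move=> i _; rewrite /bound; ring.
by rewrite sumrB big_split sumrB /= -!mulr_sumr sum_pi_mix sum_pi_dotv_mix pi'_sum1 mulr1.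
Qed.
End DPGStep.

Theorem proposition6 (R : realType) (m p : nat)
  (A : nat -> 'M[R]_m) (Om : 'I_m -> set 'rV[R]_p) (c : 'rV[R]_p)
  (alpha : nat -> R) (pi : nat -> 'I_m -> R) (theta : nat -> 'I_m -> 'rV[R]_p) :
  (forall t, row_stochastic (A t)) ->
  (forall i, Om i !=set0) ->
  (forall i, closed (Om i)) ->
  (forall i, convex_set (Om i)) ->
  (\bigcap_(i in [set: 'I_m]) Om i) !=set0 ->
  (forall t, 0 < alpha t) ->
  (forall t i, 0 <= pi t i) ->
  (forall t, \sum_(i < m) pi t i = 1) ->
  (forall t j, pi t j = \sum_(i < m) pi t.+1 i * A t i j) ->
  (forall t i, is_proj (Om i) (dpg_mix A theta alpha c t i) (theta t.+1 i)) ->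
  forall v : 'rV[R]_p, (forall i, Om i v) ->
  forall t : nat,
    \sum_(i < m) pi t.+1 i * enorm (theta t.+1 i - v) ^+ 2
    <= \sum_(i < m) pi t i * enorm (theta t i - v) ^+ 2
       - 2 * alpha t * dotv c (wavg pi theta t - v)
       + enorm c ^+ 2 * alpha t ^+ 2
       + 2 * enorm c * alpha t * \sum_(i < m) pi t i * enorm (theta t i - wavg pi theta t)
       - \sum_(i < m) pi t.+1 i * enorm (dpg_phi A theta alpha c t i) ^+ 2.
Proof.
move=> stochA _ _ convOm _ alpha_gt0 pi_ge0 pi_sum1 pi_mix proj_theta v Om_v t.
have consensus_ge0 :
    0 <= 2 * enorm c * alpha t * \sum_(i < m) pi t i * enorm (theta t i - wavg pi theta t).
  apply: mulr_ge0; last by apply: sumr_ge0 => i _; rewrite mulr_ge0 ?enorm_ge0.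
  by rewrite !mulr_ge0 ?enorm_ge0 ?(ltW (alpha_gt0 t)).
have := dpg_step_sqdist (stochA t) convOm (pi_sum1 t) (pi_sum1 t.+1) (pi_ge0 t.+1) (pi_mix t)
  (proj_theta t) Om_v.
lra.
Qed.
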